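(* Let $n\ge 2$ and let $(a_1,a_2,\dots,a_n)\in\mathbb{N}^n$ with $a_1\ge 2$. Choose a prime $\ell>\max\{a_1,\dots,a_n\}$ and write its base-$a_1$ expansion as \[ \ell=c_d a_1^{d-1}+c_{d-1}a_1^{d-2}+\cdots+c_2a_1+c_1,\qquad 0\le c_i<a_1. \] For each $2\le k\le n$ define \[ \mathcal{P}_k(x)=\frac{a_k}{\ell\,a_1}\,x\,\bigl(c_d x^{d-1}+c_{d-1}x^{d-2}+\cdots+c_1\bigr), \] and consider the curve $\Gamma:[0,a_1]\to\mathbb{R}^n$, $\Gamma(x)=\bigl(x,\mathcal{P}_2(x),\mathcal{P}_3(x),\dots,\mathcal{P}_n(x)\bigr)$. Then: (a) $\Gamma(0)=(0,0,\dots,0)$ and $\Gamma(a_1)=(a_1,a_2,\dots,a_n)$; (b) for every integer $1\le x\le a_1-1$, none of the values $\mathcal{P}_k(x)$ ($2\le k\le n$) is an integer; hence $\Gamma$ meets no lattice point of $\mathbb{Z}^n$ other than $\Gamma(0)$ and $\Gamma(a_1)$.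
   Context: $\mathbb{N}$ denotes the positive integers. *)

From mathcomp Require Import all_boot all_order all_algebra.
From mathcomp Require Import reals.
Set Implicit Arguments. Unset Strict Implicit. Unset Printing Implicit Defensive.
Import Order.TTheory GRing.Theory Num.Theory.
Local Open Scope ring_scope.

Definition digit_poly (R : realType) (c : nat -> nat) (d : nat) (x : R) : R :=
  \sum_(1 <= i < d.+1) (c i)%:R * x ^+ i.-1.

Definition Pk (R : realType) (a1 ak l : nat) (c : nat -> nat) (d : nat) (x : R) : R :=
  (ak%:R / (l%:R * a1%:R)) * x * digit_poly c d x.

Definition Gamma (R : realType) (a : nat -> nat) (l : nat) (c : nat -> nat) (d : nat)
  (x : R) (k : nat) : R :=
  if k == 1%N then x else Pk (a 1%N) (a k) l c d x.

Definition is_integer (R : realType) (x : R) : Prop := exists z : int, x = z%:~R.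

(** For natural [x], [P_k(x) = a_k x D(x) / (l a_1)] where [D] is the digit
    polynomial, so that [D(a_1) = l]. Since [l > a_1], some digit [c_i] with
    [i >= 2] is nonzero, which makes [D] strictly increasing on the naturals;
    hence [0 < D(x) < l] for [1 <= x < a_1]. As [a_k, x < l] too, the prime [l]
    does not divide [a_k x D(x)], so [P_k(x)] is not an integer. *)
From mathcomp Require Import all_boot all_order all_algebra.
From mathcomp Require Import reals zify.

Set Implicit Arguments.
Unset Strict Implicit.
Unset Printing Implicit Defensive.
Import Order.TTheory GRing.Theory Num.Theory.
Local Open Scope ring_scope.

Definition digitn (c : nat -> nat) (d x : nat) : nat :=
  (\sum_(1 <= i < d.+1) c i * x ^ i.-1)%N.

Lemma digit_poly_natr (R : realType) c d (x : nat) :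
  digit_poly c d (x%:R : R) = (digitn c d x)%:R.
Proof.
by rewrite /digit_poly /digitn natr_sum; apply: eq_bigr => i _; rewrite natrM natrX.
Qed.

Lemma ltn_digitn c d i : (2 <= i <= d)%N -> (0 < c i)%N ->
  {homo digitn c d : x y / (x < y)%N}.
Proof.
move=> /andP[i_ge2 i_le_d] ci_gt0 x y lt_xy.
have i_in : i \in index_iota 1 d.+1 by rewrite mem_index_iota; lia.
rewrite /digitn !(bigD1_seq i i_in (iota_uniq _ _)) /= -addSn leq_add //.
  by rewrite ltn_mul2l ci_gt0 ltn_exp2r //; lia.
apply: leq_sum => j _; rewrite leq_mul //.
by case: j.-1 => [|e] //; rewrite leq_exp2r // ltnW.
Qed.

Lemma digitn_high_digit c d b : (0 < b)%N ->
  (forall i, (1 <= i <= d)%N -> (c i < b)%N) -> (b <= digitn c d b)%N ->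
  exists2 i, (2 <= i <= d)%N & (0 < c i)%N.
Proof.
move=> b_gt0 c_lt_b.
have [/hasP[i]|/hasPn no_high] := boolP (has (fun i => 0 < c i)%N (index_iota 2 d.+1)).
  by rewrite mem_index_iota ltnS; exists i.
rewrite leqNgt => /negP[]; rewrite /digitn.
case: d c_lt_b no_high => [|d] c_lt_b no_high; first by rewrite big_geq.
rewrite big_ltn // big1_seq ?addn0 ?muln1; first exact: c_lt_b.
by move=> i /andP[_ /no_high]; rewrite lt0n negbK => /eqP ->.
Qed.

Lemma is_integer_nat (R : realType) (x : R) :
  0 <= x -> is_integer x -> exists m : nat, x = m%:R.
Proof.
move=> + [[m|m] x_def]; rewrite x_def; first by exists m.
by rewrite NegzE mulrNz oppr_ge0 lern0.
Qed.

Lemma is_integer_natr_div (R : realType) (p q : nat) :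
  (0 < q)%N -> is_integer (p%:R / q%:R : R) -> (q %| p)%N.
Proof.
move=> q_gt0 /is_integer_nat [|m pq_m]; first by rewrite divr_ge0.
have q_neq0 : q%:R != 0 :> R by rewrite pnatr_eq0 -lt0n.
apply/dvdnP; exists m; apply/eqP; rewrite -(eqr_nat R) natrM -pq_m.
by rewrite divfK.
Qed.

Lemma Pk_natr (R : realType) a1 ak l c d (x : nat) :
  Pk a1 ak l c d (x%:R : R) = (ak * x * digitn c d x)%:R / (l * a1)%:R.
Proof.
by rewrite /Pk digit_poly_natr !natrM [_ / _ * _]mulrAC [LHS]mulrAC.
Qed.

Lemma Pk_not_integer (R : realType) a1 ak l c d x :
  prime l -> l = digitn c d a1 -> (forall i, (1 <= i <= d)%N -> (c i < a1)%N) ->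
  (a1 < l)%N -> (0 < ak < l)%N -> (0 < x < a1)%N ->
  ~ is_integer (Pk a1 ak l c d (x%:R : R)).
Proof.
move=> l_prime l_digitn c_lt_a1 a1_lt_l /andP[ak_gt0 ak_lt_l] /andP[x_gt0 x_lt_a1].
have [i i_range ci_gt0] : exists2 i, (2 <= i <= d)%N & (0 < c i)%N.
  by apply: (digitn_high_digit _ c_lt_a1); [lia | rewrite -l_digitn ltnW].
have D_gt0 : (0 < digitn c d x)%N.
  exact: leq_ltn_trans (leq0n _) (ltn_digitn i_range ci_gt0 x_gt0).
have D_lt_l : (digitn c d x < l)%N by rewrite l_digitn (ltn_digitn i_range).
rewrite Pk_natr => /is_integer_natr_div l_a1_dvd.
have : (l %| ak * x * digitn c d x)%N.
  apply: dvdn_trans (dvdn_mulr a1 (dvdnn l)) (l_a1_dvd _).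
  by rewrite muln_gt0 prime_gt0 //; lia.
rewrite !Euclid_dvdM // !gtnNdvd //; lia.
Qed.

Lemma Pk_at_base (R : realType) a1 ak l c d :
  l = digitn c d a1 -> (0 < l)%N -> (0 < a1)%N -> Pk a1 ak l c d (a1%:R : R) = ak%:R.
Proof.
move=> l_digitn l_gt0 a1_gt0.
rewrite Pk_natr -l_digitn mulnAC -mulnA natrM mulfK //.
by rewrite pnatr_eq0 muln_eq0 negb_or -!lt0n l_gt0.
Qed.

Theorem lemma2p2 (R : realType) (n : nat) (a : nat -> nat) (l : nat)
  (c : nat -> nat) (d : nat) :
  (2 <= n)%N ->
  (forall k, (1 <= k <= n)%N -> (0 < a k)%N) ->
  (2 <= a 1%N)%N ->
  prime l ->
  (forall k, (1 <= k <= n)%N -> (a k < l)%N) ->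
  l = (\sum_(1 <= i < d.+1) c i * a 1%N ^ i.-1)%N ->
  (forall i, (1 <= i <= d)%N -> (c i < a 1%N)%N) ->
  (* (a) endpoints *)
  (forall k, (1 <= k <= n)%N ->
     Gamma a l c d (0 : R) k = 0 /\ Gamma a l c d ((a 1%N)%:R : R) k = (a k)%:R)
  /\
  (* (b) no P_k takes an integer value at integers 1 <= x <= a_1 - 1 *)
  (forall k, (2 <= k <= n)%N -> forall x : nat, (1 <= x <= a 1%N - 1)%N ->
     ~ is_integer (Pk (a 1%N) (a k) l c d (x%:R : R)))
  /\
  (* hence Gamma on [0, a_1] meets no lattice point other than its endpoints *)
  (forall x : R, 0 <= x <= (a 1%N)%:R ->
     (forall k, (1 <= k <= n)%N -> is_integer (Gamma a l c d x k)) ->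
     x = 0 \/ x = (a 1%N)%:R).
Proof.
move=> n_ge2 a_gt0 a1_ge2 l_prime a_lt_l l_def c_lt_a1.
have l_digitn : l = digitn c d (a 1%N) := l_def.
have a1_lt_l : (a 1%N < l)%N by apply: a_lt_l; lia.
have P_not_int k x : (2 <= k <= n)%N -> (0 < x < a 1%N)%N ->
    ~ is_integer (Pk (a 1%N) (a k) l c d (x%:R : R)).
  by move=> k_range; apply: Pk_not_integer l_digitn _ _ _ => //; rewrite a_gt0 ?a_lt_l //; lia.
split; [|split].
- move=> k _; rewrite /Gamma; case: eqP => [->|_]; split => //.
    by rewrite /Pk mulr0 mul0r.
  by rewrite Pk_at_base // ?(prime_gt0 l_prime) ?(ltnW a1_ge2).
- by move=> k k_range x x_range; apply: P_not_int => //; lia.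
move=> x /andP[x_ge0 x_le_a1] Gamma_int.
have [m x_def] := is_integer_nat x_ge0 (Gamma_int 1%N ltac:(lia)).
have m_le_a1 : (m <= a 1%N)%N by rewrite -(ler_nat R) -x_def.
have [m0|m_gt0] := posnP m; first by left; rewrite x_def m0.
have [m_a1|m_neq_a1] := eqVneq m (a 1%N); first by right; rewrite x_def m_a1.
exfalso; apply: (P_not_int 2%N m); first lia.
  by rewrite m_gt0 ltn_neqAle m_neq_a1.
by have := Gamma_int 2%N ltac:(lia); rewrite /Gamma /= x_def.
Qed.
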